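(* Let $n\geq 2$ be an integer, $b:=-n+i$, and let $D\subset\{0,1,\ldots,\lfloor n^2/2\rfloor\}$ be such that $|\delta-\delta'|\neq 1$ for all $\delta,\delta'\in\Delta:=D-D$. If $\alpha=\sum_{j\ge1}\alpha_jb^{-j}$ with $\alpha_j\in\Delta$ for all $j$, then $$\underline{\dim}_B\big(C_{n,D}\cap(C_{n,D}+\alpha)\big)=\liminf_{k\to\infty}\frac{\log M_k(\alpha)}{k\log|b|},$$ where $M_k(\alpha):=\prod_{j=1}^k|D\cap(D+\alpha_j)|$.
   Context: $C_{n,D}$ is the attractor of the iterated function system $\{z\mapsto b^{-1}(z+d): d\in D\}$, i.e. $C_{n,D}=\{\sum_{j\ge1}d_jb^{-j}: d_j\in D\}$. $\underline{\dim}_B$ denotes lower box-counting dimension. $D+\alpha_j=\{d+\alpha_j: d\in D\}$. *)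

From Stdlib Require Import Reals ZArith List Lia.
From Coquelicot Require Import Coquelicot.
Open Scope R_scope.

Definition base (n : nat) : Complex.C := (- INR n, 1)%R.

Definition binvpow (n j : nat) : Complex.C := Cinv (pow_n (K := C_Ring) (base n) j).

(* C_{n,D} = { sum_{j>=1} d_j b^{-j} : d_j in D } ; the sequence d is indexed
   from 1 (d 0 is irrelevant). *)
Definition attractor (n : nat) (D : list nat) (z : Complex.C) : Prop :=
  exists d : nat -> nat,
    (forall j, (1 <= j)%nat -> In (d j) D) /\
    is_series (fun k => Cmult (RtoC (INR (d (S k)))) (binvpow n (S k))) z.

Definition in_diffset (D : list nat) (x : Z) : Prop :=
  exists d d', In d D /\ In d' D /\ x = (Z.of_nat d - Z.of_nat d')%Z.

Definition card_inter_shift (D : list nat) (a : Z) : nat :=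
  length (filter (fun d => existsb (fun d' => Z.eqb (Z.of_nat d) (Z.of_nat d' + a)) D) D).

Fixpoint Mk (D : list nat) (alpha : nat -> Z) (k : nat) : nat :=
  match k with
  | O => 1%nat
  | S k' => (Mk D alpha k' * card_inter_shift D (alpha k))%nat
  end.

Definition covered_by (F : Complex.C -> Prop) (m : nat) (delta : R) : Prop :=
  exists U : nat -> Complex.C -> Prop,
    (forall i, (i < m)%nat -> forall x y, U i x -> U i y -> Cmod (Cminus x y) <= delta) /\
    (forall z, F z -> exists i, (i < m)%nat /\ U i z).

(* N_delta(F): smallest number of sets of diameter at most delta covering F
   (+oo if there is none). *)
Definition cover_number (F : Complex.C -> Prop) (delta : R) : Rbar :=
  Glb_Rbar (fun r => exists m : nat, r = INR m /\ covered_by F m delta).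

Definition box_ratio (F : Complex.C -> Prop) (delta : R) : R :=
  ln (real (cover_number F delta)) / (- ln delta).

(* lower box dimension: liminf_{delta -> 0+} log N_delta(F) / (- log delta),
   written as sup_{eps>0} inf_{0<delta<eps} of the ratio. *)
Definition lower_box_dim (F : Complex.C -> Prop) : Rbar :=
  Lub_Rbar (fun y => exists eps, 0 < eps /\
     Rbar_le (Finite y) (Glb_Rbar (fun r => exists delta, 0 < delta < eps /\ r = box_ratio F delta))).

(* Because the digits of [D] lie in [{0, ..., n^2/2}] and no two
   elements of [Delta] differ by [1], an expansion of [0] with digits in [Delta - Delta] is
   trivial: [b^2] (or [b^3] when [n = 2]) times it has imaginary part equal to a small
   integer combination of its first digits plus a tail of modulus less than [2].  Comparing
   the expansions of [z] and [z - alpha] digit by digit, [C ∩ (C + alpha)] is therefore the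
   set of expansions whose [j]-th digit lies in [D ∩ (D + alpha_j)].  Its [M_k] cylinders of
   generation [k] have diameter [O(|b|^-k)], and points of distinct cylinders are
   [|b|^-k]-apart, since [b^k] times their difference is a nonzero Gaussian integer
   ([{0, ..., n^2}] being a complete residue system modulo [b]).  So [N_delta] is squeezed
   between consecutive [M_k], which yields the liminf formula. *)

From Stdlib Require Import Reals ZArith List Lia Lra Classical IndefiniteDescription.
From Coquelicot Require Import Coquelicot.
Open Scope R_scope.

(** * Lower box dimension from covering numbers at geometric scales *)

Lemma INR_eventually_gt (T : R) : exists N : nat, forall k, (N <= k)%nat -> T < INR k.
Proof.
  destruct (INR_unbounded T) as [N HN]. exists N. intros k Hk.
  apply le_INR in Hk. lra.
Qed.

Lemma covered_by_le F m delta delta' :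
  covered_by F m delta -> delta <= delta' -> covered_by F m delta'.
Proof.
  intros [U [Hdiam Hcov]] Hle. exists U. split; auto.
  intros i Hi x y Hx Hy. specialize (Hdiam i Hi x y Hx Hy). lra.
Qed.

Lemma Glb_Rbar_finite (S : R -> Prop) (x0 lo : R) :
  S x0 -> (forall x, S x -> lo <= x) ->
  exists g, Glb_Rbar S = Finite g /\ (forall x, S x -> g <= x) /\
    (forall b, (forall x, S x -> b <= x) -> b <= g).
Proof.
  intros H0 Hlo. destruct (Glb_Rbar_correct S) as [Hlb Hgr].
  assert (A1 := Hlb x0 H0).
  assert (A2 : Rbar_le lo (Glb_Rbar S)) by (apply Hgr; intros x Hx; simpl; auto).
  destruct (Glb_Rbar S) as [g| |]; simpl in A1, A2; try contradiction.
  exists g. split; [reflexivity | split].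
  - intros x Hx. exact (Hlb x Hx).
  - intros b Hb. assert (A3 : Rbar_le b (Finite g)) by (apply Hgr; intros x Hx; simpl; auto).
    exact A3.
Qed.

Lemma pow_inv_bracket (r delta : R) : 1 < r -> 0 < delta < 1 ->
  exists k : nat, / r ^ S k <= delta < / r ^ k.
Proof.
  intros Hr Hd.
  assert (Hl : 0 < ln r) by (rewrite <- ln_1; apply ln_increasing; lra).
  assert (Hex : exists m : nat, / r ^ m <= delta).
  { destruct (INR_eventually_gt (- ln delta / ln r)) as [N HN].
    exists N. specialize (HN N (le_n _)).
    assert (HpN : 0 < r ^ N) by (apply pow_lt; lra).
    apply Rlt_le, ln_lt_inv; auto. apply Rinv_0_lt_compat; auto. lra.
    rewrite ln_Rinv, ln_pow by lra. apply Rlt_div_l in HN; auto. lra. }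
  destruct Hex as [m Hm]. induction m as [|m IH].
  - simpl in Hm. rewrite Rinv_1 in Hm. lra.
  - destruct (Rle_lt_dec (/ r ^ m) delta) as [H|H]; [apply IH, H | exists m; auto].
Qed.

Lemma lower_box_dim_eq (F : C -> Prop) (L : R) :
  (forall eps eta, 0 < eps -> 0 < eta ->
     exists delta, 0 < delta < eps /\ box_ratio F delta <= L + eta) ->
  (forall eta, 0 < eta -> exists eps, 0 < eps /\
     forall delta, 0 < delta < eps -> L - eta <= box_ratio F delta) ->
  lower_box_dim F = Finite L.
Proof.
  intros Hup Hlow. unfold lower_box_dim.
  set (G := fun eps => Glb_Rbar (fun r => exists delta, 0 < delta < eps /\ r = box_ratio F delta)).
  assert (HG : forall eta eps,
            (forall delta, 0 < delta < eps -> L - eta <= box_ratio F delta) ->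
            Rbar_le (L - eta) (G eps)).
  { intros eta eps Heps. apply Glb_Rbar_correct. intros x [delta [Hd ->]]. apply Heps, Hd. }
  destruct (Lub_Rbar_correct (fun y => exists eps, 0 < eps /\ Rbar_le (Finite y) (G eps)))
    as [Hub Hleast].
  apply Rbar_le_antisym.
  - apply Hleast. intros y [eps [He Hy]]. apply le_epsilon. intros eta Heta.
    destruct (Hup eps eta He Heta) as [delta [Hd Hr]].
    assert (Hq : Rbar_le (G eps) (box_ratio F delta)) by (apply Glb_Rbar_correct; eauto).
    fold G in Hy. destruct (G eps); simpl in Hy, Hq; try contradiction; lra.
  - assert (Hlub : forall eta, 0 < eta ->
        Rbar_le (L - eta) (Lub_Rbar (fun y => exists eps, 0 < eps /\ Rbar_le (Finite y) (G eps)))).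
    { intros eta Heta. destruct (Hlow eta Heta) as [eps [He Heps]].
      apply Hub. exists eps. split; [exact He | apply HG, Heps]. }
    assert (H1 := Hlub 1 Rlt_0_1).
    destruct (Lub_Rbar _) as [l| |]; simpl in H1 |- *; auto.
    apply le_epsilon. intros eta Heta. specialize (Hlub eta Heta). simpl in Hlub. lra.
Qed.

Definition growth_rate (M : nat -> nat) (rho : R) (k : nat) : R :=
  ln (INR (M k)) / (INR k * ln rho).

Section CoveringDimension.

Variables (F : C -> Prop) (M : nat -> nat) (rho K Q : R).
Hypothesis rho_gt1 : 1 < rho.
Hypothesis K_pos : 0 < K.
Hypothesis Q_ge1 : 1 <= Q.
Hypothesis M_ge1 : forall k, (1 <= M k)%nat.
Hypothesis M_le_pow : forall k, INR (M k) <= Q ^ k.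
Hypothesis M_covers : forall k, covered_by F (M k) (K / rho ^ k).
Hypothesis M_le_covers :
  forall k m delta, delta < / rho ^ k -> covered_by F m delta -> (M k <= m)%nat.

Local Notation c := (growth_rate M rho).

Lemma ln_rho_pos : 0 < ln rho.
Proof. rewrite <- ln_1. apply ln_increasing; lra. Qed.

Lemma rho_pow_pos k : 0 < rho ^ k.
Proof. apply pow_lt. lra. Qed.

Lemma INR_M_ge1 k : 1 <= INR (M k).
Proof. apply (le_INR 1), M_ge1. Qed.

Lemma ln_M_nonneg k : 0 <= ln (INR (M k)).
Proof. rewrite <- ln_1. apply ln_le; [lra | apply INR_M_ge1]. Qed.

(* At [k = 0] the right side is [_ / 0 = 0], and the left one vanishes as [M 0 <= Q ^ 0 = 1]. *)
Lemma ln_M_growth_rate k : ln (INR (M k)) = c k * (INR k * ln rho).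
Proof.
  assert (Hl := ln_rho_pos). unfold growth_rate. destruct k as [|k].
  - assert (H0 := M_le_pow 0). assert (H1 := INR_M_ge1 0). simpl in H0 |- *.
    replace (INR (M 0%nat)) with 1 by lra. rewrite ln_1. lra.
  - field. split; [lra | apply not_0_INR; lia].
Qed.

Lemma growth_rate_nonneg k : 0 <= c k.
Proof.
  assert (Hl := ln_rho_pos). unfold growth_rate. destruct k as [|k].
  - simpl. rewrite Rmult_0_l, Rdiv_0_r. lra.
  - apply Rdiv_le_0_compat; [apply ln_M_nonneg|].
    apply Rmult_lt_0_compat; [apply lt_0_INR; lia | lra].
Qed.

Lemma growth_rate_le k : c k <= ln Q / ln rho.
Proof.
  assert (Hl := ln_rho_pos).
  assert (HlQ : 0 <= ln Q) by (rewrite <- ln_1; apply ln_le; lra).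
  apply (Rmult_le_reg_r (ln rho)); [lra|].
  replace (ln Q / ln rho * ln rho) with (ln Q) by (field; lra).
  destruct k as [|k].
  - unfold growth_rate. simpl. rewrite Rmult_0_l, Rdiv_0_r. lra.
  - assert (Hk : 0 < INR (S k)) by (apply lt_0_INR; lia).
    apply (Rmult_le_reg_l (INR (S k))); [lra|].
    replace (INR (S k) * (c (S k) * ln rho)) with (ln (INR (M (S k))))
      by (rewrite ln_M_growth_rate; ring).
    rewrite <- ln_pow by lra. apply ln_le; [assert (H := INR_M_ge1 (S k)); lra | apply M_le_pow].
Qed.

Lemma is_LimInf_growth_rate : exists L, 0 <= L /\ is_LimInf_seq c (Finite L).
Proof.
  destruct (ex_LimInf_seq c) as [[L| |] HL].
  - exists L. split; [|exact HL].
    apply Rnot_lt_le. intro HLneg.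
    assert (He : 0 < - L) by lra. destruct (proj1 (HL (mkposreal _ He)) 0%nat) as [k [_ Hk]].
    simpl in Hk. assert (H := growth_rate_nonneg k). lra.
  - destruct (HL (ln Q / ln rho)) as [N HN].
    specialize (HN N (le_n _)). assert (H := growth_rate_le N). lra.
  - destruct (HL 0 0%nat) as [k [_ Hk]]. assert (H := growth_rate_nonneg k). lra.
Qed.

Lemma cover_number_between delta : 0 < delta ->
  exists g, cover_number F delta = Finite g /\
    (forall k, K / rho ^ k <= delta -> g <= INR (M k)) /\
    (forall k, delta < / rho ^ k -> INR (M k) <= g).
Proof.
  intros Hd. assert (Hl := ln_rho_pos).
  assert (Hk0 : exists k, K / rho ^ k <= delta).
  { destruct (INR_eventually_gt ((ln K - ln delta) / ln rho)) as [N HN].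
    exists N. specialize (HN N (le_n _)). apply Rlt_le, ln_lt_inv; auto.
    - apply Rdiv_lt_0_compat; auto using rho_pow_pos.
    - rewrite ln_div, ln_pow; auto using rho_pow_pos; try lra.
      apply Rlt_div_l in HN; auto. lra. }
  destruct Hk0 as [k0 Hk0].
  destruct (Glb_Rbar_finite (fun r => exists m : nat, r = INR m /\ covered_by F m delta)
              (INR (M k0)) 0) as [g [Hg [Hlb Hgreatest]]].
  - exists (M k0). split; auto. eapply covered_by_le; eauto.
  - intros x [m [-> _]]. apply pos_INR.
  - exists g. split; [exact Hg | split].
    + intros k Hk. apply Hlb. exists (M k). split; auto. eapply covered_by_le; eauto.
    + intros k Hk. apply Hgreatest. intros x [m [-> Hm]]. apply le_INR. eapply M_le_covers; eauto.
Qed.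

Lemma scale_eventually_gt (T : R) : exists N, forall k, (N <= k)%nat -> T < INR k * ln rho.
Proof.
  assert (Hl := ln_rho_pos).
  destruct (INR_eventually_gt (T / ln rho)) as [N HN]. exists N. intros k Hk.
  specialize (HN k Hk). apply Rlt_div_l in HN; lra.
Qed.

Lemma box_ratio_at_scale k : ln K < INR k * ln rho ->
  box_ratio F (K / rho ^ k) * (INR k * ln rho - ln K) <= c k * (INR k * ln rho).
Proof.
  intros HX. assert (Hp := rho_pow_pos k).
  assert (Hlnd : ln (K / rho ^ k) = ln K - INR k * ln rho) by (rewrite ln_div, ln_pow; auto; lra).
  assert (Hd1 : K / rho ^ k < 1).
  { apply ln_lt_inv; [apply Rdiv_lt_0_compat; auto | lra | rewrite Hlnd, ln_1; lra]. }
  destruct (cover_number_between (K / rho ^ k)) as [g [Hg [Hgle Hgge]]].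
  { apply Rdiv_lt_0_compat; auto. }
  assert (Hg1 : 1 <= g).
  { assert (H := Hgge 0%nat). simpl in H. rewrite Rinv_1 in H. specialize (H Hd1).
    assert (H' := INR_M_ge1 0). lra. }
  unfold box_ratio. rewrite Hg, Hlnd. simpl.
  replace (ln g / - (ln K - INR k * ln rho) * (INR k * ln rho - ln K)) with (ln g) by (field; lra).
  rewrite <- ln_M_growth_rate. apply ln_le; [lra | apply Hgle, Rle_refl].
Qed.

Lemma box_ratio_between_scales k delta : / rho ^ S k <= delta < / rho ^ k ->
  c k * (INR k * ln rho) <= box_ratio F delta * (INR (S k) * ln rho).
Proof.
  intros [Hlo Hhi]. assert (Hl := ln_rho_pos). assert (Hp := rho_pow_pos (S k)).
  assert (Hd : 0 < delta) by (eapply Rlt_le_trans; [apply Rinv_0_lt_compat, Hp | exact Hlo]).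
  assert (Hd1 : delta < 1).
  { eapply Rlt_le_trans; [exact Hhi|]. rewrite <- Rinv_1.
    apply Rinv_le_contravar; [lra | apply pow_R1_Rle; lra]. }
  assert (Hlnd : ln delta < 0) by (rewrite <- ln_1; apply ln_increasing; lra).
  assert (Hlnd' : - ln delta <= INR (S k) * ln rho).
  { assert (H : ln (/ rho ^ S k) <= ln delta) by (apply ln_le; auto; apply Rinv_0_lt_compat, Hp).
    rewrite ln_Rinv, ln_pow in H; lra. }
  destruct (cover_number_between delta Hd) as [g [Hg [_ Hgge]]].
  specialize (Hgge k Hhi). assert (HM := INR_M_ge1 k).
  assert (Hratio : box_ratio F delta * - ln delta = ln g)
    by (unfold box_ratio; rewrite Hg; simpl; field; lra).
  assert (Hratio0 : 0 <= box_ratio F delta).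
  { unfold box_ratio. rewrite Hg. simpl. apply Rdiv_le_0_compat; [|lra].
    rewrite <- ln_1. apply ln_le; lra. }
  rewrite <- ln_M_growth_rate.
  apply Rle_trans with (ln g); [apply ln_le; lra|].
  rewrite <- Hratio. apply Rmult_le_compat_l; lra.
Qed.

Lemma box_ratio_le_often L : is_LimInf_seq c (Finite L) -> 0 <= L ->
  forall eps eta, 0 < eps -> 0 < eta ->
  exists delta, 0 < delta < eps /\ box_ratio F delta <= L + eta.
Proof.
  intros HL HL0 eps eta He Heta. assert (Hl := ln_rho_pos).
  destruct (scale_eventually_gt
              (Rmax (ln K - ln (Rmin eps 1)) (2 * (L + eta) * Rabs (ln K) / eta))) as [N HN].
  assert (Heta2 : 0 < eta / 2) by lra.
  destruct (proj1 (HL (mkposreal _ Heta2)) N) as [k [Hk Hck]]. simpl in Hck.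
  specialize (HN k Hk). set (X := INR k * ln rho) in *.
  assert (HX1 : ln K - ln (Rmin eps 1) < X) by (eapply Rle_lt_trans; [apply Rmax_l | exact HN]).
  assert (HX2 : 2 * (L + eta) * Rabs (ln K) < X * eta).
  { apply Rlt_div_l; [lra|]. eapply Rle_lt_trans; [apply Rmax_r | exact HN]. }
  assert (Hmin : 0 < Rmin eps 1) by (apply Rmin_pos; lra).
  assert (HlnK : ln K < X).
  { assert (ln (Rmin eps 1) <= 0) by (rewrite <- ln_1; apply ln_le; [lra | apply Rmin_r]). lra. }
  assert (Hp := rho_pow_pos k).
  exists (K / rho ^ k). split; [split|].
  - apply Rdiv_lt_0_compat; auto.
  - eapply Rlt_le_trans; [|apply Rmin_l].
    apply ln_lt_inv; [apply Rdiv_lt_0_compat; auto | exact Hmin |].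
    rewrite ln_div, ln_pow by lra. fold X. lra.
  - assert (Hr := box_ratio_at_scale k HlnK). fold X in Hr.
    apply (Rmult_le_reg_r (X - ln K)); [lra|].
    assert (HX0 : 0 <= X) by (apply Rmult_le_pos; [apply pos_INR | lra]).
    assert (c k * X <= (L + eta / 2) * X) by (apply Rmult_le_compat_r; lra).
    assert ((L + eta) * ln K <= (L + eta) * Rabs (ln K))
      by (apply Rmult_le_compat_l; [lra | apply Rle_abs]).
    lra.
Qed.

Lemma box_ratio_ge_eventually L : is_LimInf_seq c (Finite L) ->
  forall eta, 0 < eta -> exists eps, 0 < eps /\
    forall delta, 0 < delta < eps -> L - eta <= box_ratio F delta.
Proof.
  intros HL eta Heta. assert (Hl := ln_rho_pos).
  assert (Heta2 : 0 < eta / 2) by lra.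
  destruct (proj2 (HL (mkposreal _ Heta2))) as [N1 HN1]. simpl in HN1.
  destruct (INR_eventually_gt (2 * L / eta)) as [N2 HN2].
  set (N := S (Nat.max N1 N2)).
  assert (Hp := rho_pow_pos N).
  exists (/ rho ^ N). split; [apply Rinv_0_lt_compat, Hp|].
  intros delta Hd.
  assert (Hd1 : delta < 1).
  { assert (/ rho ^ N <= 1)
      by (rewrite <- Rinv_1; apply Rinv_le_contravar; [lra | apply pow_R1_Rle; lra]).
    lra. }
  destruct (pow_inv_bracket rho delta rho_gt1 (conj (proj1 Hd) Hd1)) as [k Hk].
  assert (HkN : (N <= k)%nat).
  { apply Nat.nlt_ge. intro Hlt.
    assert (rho ^ S k <= rho ^ N) by (apply Rle_pow; [lra | lia]).
    assert (/ rho ^ N <= / rho ^ S k) by (apply Rinv_le_contravar; auto using rho_pow_pos).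
    lra. }
  assert (Hck : L - eta / 2 < c k) by (apply HN1; lia).
  assert (HkL : 2 * L / eta < INR k) by (apply HN2; lia).
  apply Rlt_div_l in HkL; auto.
  assert (Hb := box_ratio_between_scales k delta Hk). rewrite S_INR in Hb.
  assert (HX : 0 <= INR k * ln rho) by (apply Rmult_le_pos; [apply pos_INR | lra]).
  assert ((L - eta / 2) * (INR k * ln rho) <= c k * (INR k * ln rho))
    by (apply Rmult_le_compat_r; lra).
  assert (Hk0 := pos_INR k).
  apply (Rmult_le_reg_r ((INR k + 1) * ln rho)); [apply Rmult_lt_0_compat; lra|].
  nra.
Qed.

Lemma lower_box_dim_growth_rate : lower_box_dim F = LimInf_seq c.
Proof.
  destruct is_LimInf_growth_rate as [L [HL0 HL]].
  rewrite (is_LimInf_seq_unique _ _ HL).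
  apply lower_box_dim_eq.
  - apply box_ratio_le_often; auto.
  - apply box_ratio_ge_eventually; auto.
Qed.

End CoveringDimension.

(** * Powers of the base, finite sums and series *)

Local Notation rho n := (Cmod (base n)).
Local Notation powb n j := (pow_n (K := C_Ring) (base n) j).

Lemma base_neq0 n : base n <> RtoC 0.
Proof. unfold base, RtoC. intro H. injection H. lra. Qed.

Lemma rho_gt_INR n : (2 <= n)%nat -> INR n < rho n.
Proof.
  intro Hn. unfold Cmod, base. simpl.
  assert (H2 : 2 <= INR n) by (apply (le_INR 2) in Hn; simpl in Hn; lra).
  rewrite <- (sqrt_pow2 (INR n)) at 1 by lra.
  apply sqrt_lt_1_alt. split; nra.
Qed.

Lemma rho_gt1 n : (2 <= n)%nat -> 1 < rho n.
Proof. intro Hn. assert (H := rho_gt_INR n Hn). apply (le_INR 2) in Hn. simpl in Hn. lra. Qed.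

Lemma Cmod_powb n j : Cmod (powb n j) = rho n ^ j.
Proof.
  induction j as [|j IH].
  - apply Cmod_1.
  - change (Cmod (Cmult (base n) (powb n j)) = rho n * rho n ^ j).
    rewrite Cmod_mult, IH. reflexivity.
Qed.

Lemma powb_neq0 n j : powb n j <> RtoC 0.
Proof.
  intro H. assert (H0 : Cmod (powb n j) = 0) by (rewrite H; apply Cmod_0).
  rewrite Cmod_powb in H0. revert H0. apply pow_nonzero.
  assert (0 < Cmod (base n)) by (apply Cmod_gt_0, base_neq0). lra.
Qed.

Lemma Cmod_binvpow n j : Cmod (binvpow n j) = / rho n ^ j.
Proof. unfold binvpow. rewrite Cmod_inv, Cmod_powb by apply powb_neq0. reflexivity. Qed.

Lemma base_mult_binvpow n j : Cmult (base n) (binvpow n (S j)) = binvpow n j.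
Proof.
  unfold binvpow. change (powb n (S j)) with (Cmult (base n) (powb n j)).
  assert (H1 := base_neq0 n). assert (H2 := powb_neq0 n j). field. split; auto.
Qed.

Lemma powb_mult_binvpow n j : Cmult (powb n j) (binvpow n j) = RtoC 1.
Proof. unfold binvpow. field. apply powb_neq0. Qed.

Lemma powb_mult_binvpow_add n p j : Cmult (powb n p) (binvpow n (p + j)) = binvpow n j.
Proof.
  induction p as [|p IH].
  - change (powb n 0) with (RtoC 1). apply injective_projections; simpl; ring.
  - change (powb n (S p)) with (Cmult (base n) (powb n p)). simpl plus.
    rewrite <- IH, <- (base_mult_binvpow n (p + j)).
    apply injective_projections; simpl; ring.
Qed.

Lemma powb_add_mult_binvpow n p j : Cmult (powb n (p + j)) (binvpow n p) = powb n j.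
Proof.
  rewrite Nat.add_comm. unfold binvpow. rewrite pow_n_plus.
  assert (H := powb_neq0 n p).
  change (mult (powb n j) (powb n p)) with (Cmult (powb n j) (powb n p)).
  field. exact H.
Qed.

(* Sums of the first [m] terms, whereas Coquelicot's [sum_n u m] has [m + 1] terms. *)
Fixpoint csum (u : nat -> C) (m : nat) : C :=
  match m with O => RtoC 0 | S m' => Cplus (csum u m') (u m') end.

Fixpoint rsum (u : nat -> R) (m : nat) : R :=
  match m with O => 0 | S m' => rsum u m' + u m' end.

Lemma csum_add (u : nat -> C) p m :
  csum u (p + m) = Cplus (csum u p) (csum (fun k => u (p + k)%nat) m).
Proof.
  induction m as [|m IH].
  - rewrite Nat.add_0_r. apply injective_projections; simpl; ring.
  - rewrite Nat.add_succ_r. cbn [csum]. rewrite IH. apply injective_projections; simpl; ring.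
Qed.

Lemma rsum_add (u : nat -> R) p m : rsum u (p + m) = rsum u p + rsum (fun k => u (p + k)%nat) m.
Proof.
  induction m as [|m IH].
  - rewrite Nat.add_0_r. simpl. ring.
  - rewrite Nat.add_succ_r. simpl. rewrite IH. ring.
Qed.

Lemma rsum_zero (u : nat -> R) m : (forall k, (k < m)%nat -> u k = 0) -> rsum u m = 0.
Proof.
  induction m as [|m IH]; intro H; simpl; [reflexivity|].
  rewrite IH; [rewrite (H m (Nat.lt_succ_diag_r m)); ring | intros k Hk; apply H; lia].
Qed.

Lemma rsum_le (u v : nat -> R) m : (forall k, u k <= v k) -> rsum u m <= rsum v m.
Proof. intro H. induction m; simpl; [lra | specialize (H m); lra]. Qed.

Lemma rsum_nonneg (u : nat -> R) m : (forall k, 0 <= u k) -> 0 <= rsum u m.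
Proof. intro H. induction m; simpl; [lra | specialize (H m); lra]. Qed.

Lemma rsum_le_add (u : nat -> R) m p : (forall k, 0 <= u k) -> rsum u m <= rsum u (p + m).
Proof.
  intro H. rewrite Nat.add_comm, rsum_add.
  assert (0 <= rsum (fun k => u (m + k)%nat) p) by (apply rsum_nonneg; auto). lra.
Qed.

Lemma Rabs_rsum (u : nat -> R) m : Rabs (rsum u m) <= rsum (fun k => Rabs (u k)) m.
Proof.
  induction m; simpl; [rewrite Rabs_R0; lra|].
  eapply Rle_trans; [apply Rabs_triang | lra].
Qed.

Lemma Cmod_csum (u : nat -> C) m : Cmod (csum u m) <= rsum (fun k => Cmod (u k)) m.
Proof.
  induction m; cbn [csum rsum]; [rewrite Cmod_0; lra|].
  eapply Rle_trans; [apply Cmod_triangle | lra].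
Qed.

Lemma rsum_scal (u : nat -> R) a m : rsum (fun k => a * u k) m = a * rsum u m.
Proof. induction m; simpl; [ring | rewrite IHm; ring]. Qed.

Lemma Im_mult_csum (c : C) (u : nat -> C) m :
  Im (Cmult c (csum u m)) = rsum (fun k => Im (Cmult c (u k))) m.
Proof.
  induction m as [|m IH]; cbn [csum rsum]; [simpl; ring|].
  rewrite <- IH. destruct c, (csum u m), (u m). simpl. ring.
Qed.

Lemma rsum_geom q m : 0 <= q < 1 -> rsum (fun k => q ^ k) m <= / (1 - q).
Proof.
  intro Hq. assert (H : (1 - q) * rsum (fun k => q ^ k) m = 1 - q ^ m).
  { induction m; simpl; [ring|]. rewrite Rmult_plus_distr_l, IHm. ring. }
  assert (0 <= q ^ m) by (apply pow_le; lra).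
  apply (Rmult_le_reg_l (1 - q)); [lra|]. rewrite H, Rinv_r; lra.
Qed.

Lemma sum_n_csum (u : nat -> C) m : sum_n u m = csum u (S m).
Proof.
  induction m as [|m IH].
  - rewrite sum_O. apply injective_projections; simpl; ring.
  - rewrite sum_Sn, IH. reflexivity.
Qed.

Lemma is_series_csum_close (u : nat -> C) (l : C) : is_series u l ->
  forall eps, 0 < eps -> exists N, forall m, (N <= m)%nat -> Cmod (Cminus l (csum u m)) < eps.
Proof.
  intros H eps He.
  destruct (proj1 (filterlim_locally_ball_norm _ _) H (mkposreal _ He)) as [N HN].
  exists (S N). intros [|m] Hm; [lia|].
  specialize (HN m ltac:(lia)). unfold ball_norm in HN. simpl in HN.
  rewrite <- sum_n_csum, <- Cmod_opp.
  replace (Copp (Cminus l (sum_n u m))) with (minus (sum_n u m) l); [exact HN|].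
  unfold minus, plus, opp. simpl. apply injective_projections; simpl; ring.
Qed.

Lemma Cmod_series_le (u : nat -> C) l B : is_series u l ->
  (forall m, Cmod (csum u m) <= B) -> Cmod l <= B.
Proof.
  intros Hs HB. apply le_epsilon. intros eps He.
  destruct (is_series_csum_close u l Hs eps He) as [N HN]. specialize (HN N (le_n _)).
  assert (Cmod l <= Cmod (Cminus l (csum u N)) + Cmod (csum u N)).
  { replace l with (Cplus (Cminus l (csum u N)) (csum u N)) at 1 by
      (apply injective_projections; simpl; ring).
    apply Cmod_triangle. }
  specialize (HB N). lra.
Qed.

Lemma is_series_finite (u : nat -> C) l k : is_series u l ->
  (forall j, (k <= j)%nat -> u j = RtoC 0) -> l = csum u k.
Proof.
  intros Hs H.
  assert (Hconst : forall m, (k <= m)%nat -> csum u m = csum u k).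
  { intros m Hkm. induction Hkm as [|m Hkm IH]; [reflexivity|].
    cbn [csum]. rewrite IH, H by lia. apply injective_projections; simpl; ring. }
  assert (Hz : Cmod (Cminus l (csum u k)) = 0).
  { apply Rle_antisym; [|apply Cmod_ge_0]. apply le_epsilon. intros eps He.
    destruct (is_series_csum_close u l Hs eps He) as [N HN].
    specialize (HN (Nat.max N k) ltac:(lia)). rewrite Hconst in HN by lia. lra. }
  apply Cmod_eq_0 in Hz.
  replace l with (Cplus (Cminus l (csum u k)) (csum u k))
    by (apply injective_projections; simpl; ring).
  rewrite Hz. apply injective_projections; simpl; ring.
Qed.

Lemma Cmod_series_tail_le (u : nat -> C) l (r B : R) k : 1 < r -> 0 <= B -> is_series u l ->
  (forall j, (j < k)%nat -> u j = RtoC 0) ->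
  (forall j, Cmod (u j) <= B / r ^ S j) ->
  Cmod l <= B / (r - 1) / r ^ k.
Proof.
  intros Hr HB Hs H0 Hb. apply (Cmod_series_le u l); auto. intro m.
  eapply Rle_trans; [apply Cmod_csum|].
  eapply Rle_trans; [apply (rsum_le_add _ m k); intro; apply Cmod_ge_0|].
  rewrite rsum_add.
  rewrite (rsum_zero _ k) by (intros j Hj; rewrite H0, Cmod_0 by exact Hj; reflexivity).
  assert (Hrk : 0 < r ^ k) by (apply pow_lt; lra).
  assert (Hq : 0 <= / r < 1).
  { split; [apply Rlt_le, Rinv_0_lt_compat; lra|].
    rewrite <- Rinv_1. apply Rinv_lt_contravar; lra. }
  eapply Rle_trans;
    [apply Rplus_le_compat_l, rsum_le with (v := fun j => B / r ^ S k * (/ r) ^ j)|].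
  { intro j. eapply Rle_trans; [apply Hb|]. right.
    rewrite pow_inv. replace (S (k + j)) with (S k + j)%nat by lia. rewrite pow_add.
    field. split; apply pow_nonzero; lra. }
  rewrite rsum_scal.
  assert (B / r ^ S k * rsum (pow (/ r)) m <= B / r ^ S k * / (1 - / r)).
  { apply Rmult_le_compat_l; [apply Rdiv_le_0_compat; auto; apply pow_lt; lra|].
    apply rsum_geom, Hq. }
  replace (B / (r - 1) / r ^ k) with (B / r ^ S k * / (1 - / r)); [lra|].
  simpl. field. repeat split; lra.
Qed.

(** * Expansions with integer digits *)

Definition zexpansion_term (n : nat) (e : nat -> Z) (k : nat) : C :=
  Cmult (RtoC (IZR (e (S k)))) (binvpow n (S k)).

Definition digits_bounded (n : nat) (e : nat -> Z) : Prop :=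
  forall j, (1 <= j)%nat -> (Z.abs (e j) <= Z.of_nat (n * n))%Z.

Lemma digits_bounded_R n e j : digits_bounded n e -> (1 <= j)%nat -> Rabs (IZR (e j)) <= INR n ^ 2.
Proof.
  intros H Hj. specialize (H j Hj). rewrite <- abs_IZR.
  apply IZR_le in H. rewrite <- INR_IZR_INZ, mult_INR in H. simpl. lra.
Qed.

Lemma Im_mult_zexpansion_term c n e k :
  Im (Cmult c (zexpansion_term n e k)) = IZR (e (S k)) * Im (Cmult c (binvpow n (S k))).
Proof. unfold zexpansion_term. destruct c, (binvpow n (S k)). simpl. ring. Qed.

Lemma Im_le_Cmod (z : C) : Rabs (Im z) <= Cmod z.
Proof. eapply Rle_trans; [apply Rmax_r | apply Rmax_Cmod]. Qed.

(* An explicit bound for [sum_(m >= 1) |Im b^-m|]: the first two terms exactly, the rest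
   by the geometric series of [|b|^-m <= n^-m]. *)
Definition Im_binvpow_bound (n : nat) : R :=
  1 / (INR n ^ 2 + 1) + 2 * INR n / (INR n ^ 2 + 1) ^ 2 + 1 / (INR n ^ 2 * (INR n - 1)).

Lemma Im_binvpow_1 n : Im (binvpow n 1) = - (1 / (INR n ^ 2 + 1)).
Proof.
  unfold binvpow, Cinv. simpl. field.
  assert (0 <= INR n) by apply pos_INR. nra.
Qed.

Lemma Im_binvpow_2 n : Im (binvpow n 2) = 2 * INR n / (INR n ^ 2 + 1) ^ 2.
Proof.
  unfold binvpow, Cinv. simpl. field.
  assert (0 <= INR n) by apply pos_INR. nra.
Qed.

Lemma rsum_Im_binvpow_le n m : (2 <= n)%nat ->
  rsum (fun k => Rabs (Im (binvpow n (S k)))) m <= Im_binvpow_bound n.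
Proof.
  intro Hn. unfold Im_binvpow_bound.
  assert (Hx : 2 <= INR n) by (apply (le_INR 2) in Hn; simpl in Hn; lra).
  set (f := fun k => Rabs (Im (binvpow n (S k)))).
  eapply Rle_trans; [apply (rsum_le_add f m 2); intro; apply Rabs_pos|].
  rewrite rsum_add.
  assert (Hhead : rsum f 2 = 1 / (INR n ^ 2 + 1) + 2 * INR n / (INR n ^ 2 + 1) ^ 2).
  { cbn [rsum]. unfold f. rewrite Im_binvpow_1, Im_binvpow_2, Rabs_Ropp, !Rabs_right.
    - ring.
    - apply Rle_ge, Rdiv_le_0_compat; nra.
    - apply Rle_ge, Rdiv_le_0_compat; nra. }
  assert (Htail : rsum (fun k => f (2 + k)%nat) m <= 1 / (INR n ^ 2 * (INR n - 1))).
  { eapply Rle_trans; [apply rsum_le with (v := fun k => (/ INR n) ^ 3 * (/ INR n) ^ k)|].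
    - intro k. unfold f. eapply Rle_trans; [apply Im_le_Cmod|].
      rewrite Cmod_binvpow, <- pow_add, pow_inv.
      apply Rinv_le_contravar; [apply pow_lt; lra|].
      apply pow_incr. split; [lra | apply Rlt_le, rho_gt_INR, Hn].
    - rewrite rsum_scal. eapply Rle_trans.
      + apply Rmult_le_compat_l; [apply pow_le, Rlt_le, Rinv_0_lt_compat; lra|].
        apply rsum_geom. split; [apply Rlt_le, Rinv_0_lt_compat; lra|].
        rewrite <- Rinv_1. apply Rinv_lt_contravar; lra.
      + right. field. lra. }
  lra.
Qed.

Lemma Im_scaled_tail_le n e p m : (2 <= n)%nat -> digits_bounded n e ->
  Rabs (Im (Cmult (powb n p) (csum (fun k => zexpansion_term n e (p + k)) m)))
  <= INR n ^ 2 * Im_binvpow_bound n.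
Proof.
  intros Hn He. rewrite Im_mult_csum.
  eapply Rle_trans; [apply Rabs_rsum|].
  eapply Rle_trans;
    [apply rsum_le with (v := fun k => INR n ^ 2 * Rabs (Im (binvpow n (S k))))|].
  - intro k. rewrite Im_mult_zexpansion_term, <- Nat.add_succ_r, powb_mult_binvpow_add, Rabs_mult.
    apply Rmult_le_compat_r; [apply Rabs_pos|]. apply digits_bounded_R; [exact He | lia].
  - rewrite rsum_scal. apply Rmult_le_compat_l; [apply pow_le, pos_INR|].
    apply rsum_Im_binvpow_le, Hn.
Qed.

(* The head is minus the tail, since the whole expansion vanishes. *)
Lemma Im_scaled_head_le n e p : (2 <= n)%nat -> digits_bounded n e ->
  is_series (zexpansion_term n e) (RtoC 0) ->
  Rabs (Im (Cmult (powb n p) (csum (zexpansion_term n e) p))) <= INR n ^ 2 * Im_binvpow_bound n.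
Proof.
  intros Hn He Hs. apply le_epsilon. intros eps Heps.
  assert (Hp : 0 < Cmod (powb n p)) by (apply Cmod_gt_0, powb_neq0).
  destruct (is_series_csum_close _ _ Hs (eps / Cmod (powb n p))) as [N HN];
    [apply Rdiv_lt_0_compat; auto|].
  specialize (HN (p + N)%nat ltac:(lia)).
  assert (Hsmall : Rabs (Im (Cmult (powb n p) (csum (zexpansion_term n e) (p + N)))) <= eps).
  { eapply Rle_trans; [apply Im_le_Cmod|]. rewrite Cmod_mult.
    replace (Cminus (RtoC 0) (csum (zexpansion_term n e) (p + N)))
      with (Copp (csum (zexpansion_term n e) (p + N))) in HN
      by (apply injective_projections; simpl; ring).
    rewrite Cmod_opp in HN. apply Rlt_div_r in HN; lra. }
  rewrite csum_add, Cmult_plus_distr_l in Hsmall.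
  change (Im (Cplus ?x ?y)) with (Im x + Im y) in Hsmall.
  assert (Ht := Im_scaled_tail_le n e p N Hn He).
  set (A := Im (Cmult (powb n p) (csum (zexpansion_term n e) p))) in *.
  set (B := Im (Cmult (powb n p) (csum (fun k => zexpansion_term n e (p + k)) N))) in *.
  assert (Rabs A <= Rabs (A + B) + Rabs B).
  { replace A with (A + B + - B) at 1 by ring. rewrite <- (Rabs_Ropp B). apply Rabs_triang. }
  lra.
Qed.

Lemma Im_powb_mult_binvpow n q j : (j <= q)%nat ->
  Im (Cmult (powb n q) (binvpow n j)) = Im (powb n (q - j)).
Proof.
  intro Hjq. replace q with (j + (q - j))%nat at 1 by lia.
  rewrite powb_add_mult_binvpow. reflexivity.
Qed.

Lemma Im_binvpow_bound_2 : Im_binvpow_bound 2 = 61 / 100.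
Proof. unfold Im_binvpow_bound. simpl. field. Qed.

Lemma Im_binvpow_bound_lt n : (3 <= n)%nat -> INR n ^ 2 * Im_binvpow_bound n < 2.
Proof.
  intro Hn. unfold Im_binvpow_bound.
  assert (Hx : 3 <= INR n) by (apply (le_INR 3) in Hn; simpl in Hn; lra).
  replace (INR n ^ 2 * (1 / (INR n ^ 2 + 1) + 2 * INR n / (INR n ^ 2 + 1) ^ 2
                          + 1 / (INR n ^ 2 * (INR n - 1))))
    with (INR n ^ 2 / (INR n ^ 2 + 1) + 2 * INR n ^ 3 / (INR n ^ 2 + 1) ^ 2 + 1 / (INR n - 1))
    by (field; split; nra).
  destruct (Nat.eq_dec n 3) as [->|Hn3]; [simpl; lra|].
  assert (Hx4 : 4 <= INR n)
    by (assert (H4 : (4 <= n)%nat) by lia; apply (le_INR 4) in H4; simpl in H4; lra).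
  assert (INR n ^ 2 / (INR n ^ 2 + 1) <= 1) by (apply Rle_div_l; nra).
  assert (2 * INR n ^ 3 / (INR n ^ 2 + 1) ^ 2 <= 1 / 2).
  { apply Rle_div_l; [nra|]. assert (INR n ^ 2 + 1 >= 4 * INR n) by nra.
    assert ((INR n ^ 2 + 1) ^ 2 >= 4 * INR n * (INR n ^ 2 + 1)) by nra. nra. }
  assert (1 / (INR n - 1) <= 1 / 3) by (apply Rle_div_l; lra).
  lra.
Qed.

(* For [n >= 3], [Im (b^2 * head)] is [e_1], of modulus below [2]; for [n = 2],
   [Im (b^3 * head)] is [- 4 e_1 + e_2], of modulus at most [2.44], and [|e_2| <= 4]. *)
Lemma first_digit_zero n e : (2 <= n)%nat -> digits_bounded n e ->
  (forall j, (1 <= j)%nat -> Z.abs (e j) <> 1%Z) ->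
  is_series (zexpansion_term n e) (RtoC 0) -> e 1%nat = 0%Z.
Proof.
  intros Hn He Hne1 Hs.
  assert (Hlt : Rabs (IZR (e 1%nat)) < 2).
  { destruct (Nat.eq_dec n 2) as [->|Hn2].
    - assert (H := Im_scaled_head_le 2 e 3 Hn He Hs).
      rewrite Im_mult_csum in H. cbn [rsum] in H.
      rewrite !Im_mult_zexpansion_term in H.
      rewrite !Im_powb_mult_binvpow, Im_binvpow_bound_2 in H by lia.
      assert (He2 := digits_bounded_R 2 e 2 He ltac:(lia)).
      simpl in H, He2. revert H He2. generalize (IZR (e 1%nat)) (IZR (e 2%nat)) (IZR (e 3%nat)).
      intros a b c. unfold Rabs. repeat destruct Rcase_abs; intros; lra.
    - assert (H := Im_scaled_head_le n e 2 Hn He Hs).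
      rewrite Im_mult_csum in H. cbn [rsum] in H.
      rewrite !Im_mult_zexpansion_term in H.
      rewrite !Im_powb_mult_binvpow in H by lia.
      assert (Hb := Im_binvpow_bound_lt n ltac:(lia)).
      simpl in H. revert H Hb. generalize (IZR (e 1%nat)) (IZR (e 2%nat)).
      intros a b. unfold Rabs. repeat destruct Rcase_abs; intros; lra. }
  specialize (Hne1 1%nat (le_n _)).
  rewrite <- abs_IZR in Hlt. apply lt_IZR in Hlt. lia.
Qed.

Lemma zexpansion_shift n e : e 1%nat = 0%Z -> is_series (zexpansion_term n e) (RtoC 0) ->
  is_series (zexpansion_term n (fun j => e (S j))) (RtoC 0).
Proof.
  intros He1 Hs.
  assert (Htail : is_series (fun k => zexpansion_term n e (S k)) (RtoC 0)).
  { apply is_series_incr_1.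
    match goal with |- is_series _ ?l => replace l with (RtoC 0); [exact Hs|] end.
    unfold zexpansion_term. rewrite He1. apply injective_projections; simpl; ring. }
  apply (is_series_scal (base n)) in Htail.
  match type of Htail with is_series _ ?l =>
    replace l with (RtoC 0) in Htail by (apply injective_projections; simpl; ring) end.
  revert Htail. apply is_series_ext. intro k.
  unfold zexpansion_term. rewrite <- (base_mult_binvpow n (S k)).
  change (scal (base n) (Cmult (RtoC (IZR (e (S (S k))))) (binvpow n (S (S k))))
          = Cmult (RtoC (IZR (e (S (S k))))) (Cmult (base n) (binvpow n (S (S k))))).
  destruct (base n), (binvpow n (S (S k))). apply injective_projections; simpl; ring.
Qed.

Lemma zexpansion_zero_digits n e : (2 <= n)%nat -> digits_bounded n e ->
  (forall j, (1 <= j)%nat -> Z.abs (e j) <> 1%Z) ->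
  is_series (zexpansion_term n e) (RtoC 0) -> forall j, (1 <= j)%nat -> e j = 0%Z.
Proof.
  intros Hn He Hne1 Hs [|i] Hi; [lia|]. clear Hi.
  revert e He Hne1 Hs. induction i as [|i IH]; intros e He Hne1 Hs.
  - exact (first_digit_zero n e Hn He Hne1 Hs).
  - apply (IH (fun j => e (S j))).
    + intros j Hj. apply He. lia.
    + intros j Hj. apply Hne1. lia.
    + apply zexpansion_shift; [exact (first_digit_zero n e Hn He Hne1 Hs) | exact Hs].
Qed.

(* Real and imaginary parts of the Gaussian integer [sum_(j <= k) u j * b ^ (k - j)],
   computed by Horner's rule with [b = -n + i]. *)
Fixpoint gauss_horner (n : nat) (u : nat -> Z) (k : nat) : Z * Z :=
  match k with
  | O => (0%Z, 0%Z)
  | S k' => let (x, y) := gauss_horner n u k' in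
      ((- Z.of_nat n * x - y + u (S k'))%Z, (x - Z.of_nat n * y)%Z)
  end.

Lemma gauss_horner_eq n u k :
  (IZR (fst (gauss_horner n u k)), IZR (snd (gauss_horner n u k)))
  = Cmult (powb n k) (csum (zexpansion_term n u) k).
Proof.
  induction k as [|k IH].
  - apply injective_projections; simpl; ring.
  - cbn [csum gauss_horner]. destruct (gauss_horner n u k) as [x y]. simpl in IH.
    replace (Cmult (powb n (S k)) (Cplus (csum (zexpansion_term n u) k) (zexpansion_term n u k)))
      with (Cplus (Cmult (base n) (Cmult (powb n k) (csum (zexpansion_term n u) k)))
                  (Cmult (RtoC (IZR (u (S k)))) (Cmult (powb n (S k)) (binvpow n (S k)))))
      by (change (powb n (S k)) with (Cmult (base n) (powb n k)); unfold zexpansion_term; ring).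
    rewrite <- IH, powb_mult_binvpow. cbn [fst snd].
    rewrite !plus_IZR, !minus_IZR, !mult_IZR, opp_IZR, <- INR_IZR_INZ.
    unfold base. apply injective_projections; simpl; ring.
Qed.

(* [{0, ..., n^2}] is a complete residue system modulo [b], as [|b|^2 = n^2 + 1]. *)
Lemma gauss_horner_eq0 n u k :
  (forall j, (1 <= j <= k)%nat -> (Z.abs (u j) <= Z.of_nat (n * n))%Z) ->
  gauss_horner n u k = (0%Z, 0%Z) -> forall j, (1 <= j <= k)%nat -> u j = 0%Z.
Proof.
  induction k as [|k IH]; intros Hb H0 j Hj; [lia|].
  cbn [gauss_horner] in H0. destruct (gauss_horner n u k) as [x y] eqn:E.
  injection H0 as H1 H2.
  assert (Hu := Hb (S k) ltac:(lia)). rewrite Nat2Z.inj_mul in Hu.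
  set (N := Z.of_nat n) in *. set (U := u (S k)) in *.
  assert (Hx : x = (N * y)%Z) by lia. subst x.
  assert (HU : U = ((N * N + 1) * y)%Z) by lia.
  assert (Hy : y = 0%Z).
  { destruct (Z.eq_dec y 0) as [|Hy]; auto. exfalso. rewrite HU in Hu.
    assert (0 <= N)%Z by (unfold N; lia). rewrite Z.abs_mul in Hu.
    rewrite (Z.abs_eq (N * N + 1)) in Hu by nia. assert (1 <= Z.abs y)%Z by lia. nia. }
  subst y. destruct (Nat.eq_dec j (S k)) as [->|Hjk].
  - fold U. lia.
  - apply IH; [intros; apply Hb; lia | f_equal; lia | lia].
Qed.

Lemma Cmod_csum_zexpansion_ge n u k : (2 <= n)%nat ->
  (forall j, (1 <= j <= k)%nat -> (Z.abs (u j) <= Z.of_nat (n * n))%Z) ->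
  (exists j, (1 <= j <= k)%nat /\ u j <> 0%Z) ->
  / rho n ^ k <= Cmod (csum (zexpansion_term n u) k).
Proof.
  intros Hn Hb [j [Hj Hu]].
  assert (Hnz : gauss_horner n u k <> (0%Z, 0%Z))
    by (intro H; apply Hu; eapply gauss_horner_eq0; eauto).
  assert (H1 : 1 <= Cmod (Cmult (powb n k) (csum (zexpansion_term n u) k))).
  { rewrite <- gauss_horner_eq. destruct (gauss_horner n u k) as [x y]. cbn [fst snd].
    eapply Rle_trans; [|apply Rmax_Cmod]. cbn [fst snd].
    destruct (Z.eq_dec x 0) as [->|Hx].
    - assert (y <> 0%Z) by (intro; subst; apply Hnz; auto).
      eapply Rle_trans; [|apply Rmax_r]. rewrite <- abs_IZR. apply (IZR_le 1). lia.
    - eapply Rle_trans; [|apply Rmax_l]. rewrite <- abs_IZR. apply (IZR_le 1). lia. }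
  rewrite Cmod_mult, Cmod_powb in H1.
  assert (Hp : 0 < rho n ^ k) by (apply pow_lt; assert (H := rho_gt1 n Hn); lra).
  apply (Rmult_le_reg_l (rho n ^ k)); auto. rewrite Rinv_r; lra.
Qed.

(** * Digit words *)

Lemma NoDup_flat_map {A B : Type} (f : A -> list B) (l : list A) :
  NoDup l -> (forall x, NoDup (f x)) ->
  (forall x y b, In x l -> In y l -> In b (f x) -> In b (f y) -> x = y) ->
  NoDup (flat_map f l).
Proof.
  induction l as [|x l IH]; intros Hl Hf Hdisj; simpl; [constructor|].
  inversion Hl; subst. apply NoDup_app; auto.
  - apply IH; auto. intros y z b Hy Hz. apply Hdisj; simpl; auto.
  - intros b Hb Hb'. apply in_flat_map in Hb'. destruct Hb' as [y [Hy Hby]].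
    assert (x = y) by (eapply Hdisj; simpl; eauto). subst. contradiction.
Qed.

Lemma map_seq_ext_inv {A : Type} (f g : nat -> A) s k : map f (seq s k) = map g (seq s k) ->
  forall j, (s <= j < s + k)%nat -> f j = g j.
Proof.
  revert s. induction k as [|k IH]; intros s H j Hj; [lia|].
  simpl in H. injection H as Hs Hrest. destruct (Nat.eq_dec j s) as [->|Hjs]; [exact Hs|].
  apply (IH (S s)); [exact Hrest | lia].
Qed.

Lemma NoDup_length_le_indices {A : Type} (l : list A) (m : nat) (P : A -> nat -> Prop) :
  NoDup l -> (forall x, In x l -> exists i, (i < m)%nat /\ P x i) ->
  (forall x y i, In x l -> In y l -> (i < m)%nat -> P x i -> P y i -> x = y) ->
  (length l <= m)%nat.
Proof.
  intros Hl Hex Hinj.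
  assert (Hchoice : forall x, exists i, In x l -> (i < m)%nat /\ P x i).
  { intro x. destruct (classic (In x l)) as [Hx|Hx].
    - destruct (Hex x Hx) as [i Hi]. exists i. auto.
    - exists 0%nat. contradiction. }
  set (f := fun x => proj1_sig (constructive_indefinite_description _ (Hchoice x))).
  assert (Hf : forall x, In x l -> (f x < m)%nat /\ P x (f x)).
  { intros x Hx. unfold f. destruct (constructive_indefinite_description _ _) as [i Hi]. auto. }
  assert (Hmap : NoDup (map f l)).
  { apply NoDup_map_NoDup_ForallPairs; [|exact Hl]. intros x y Hx Hy Hxy.
    apply (Hinj x y (f x)); auto; [apply Hf, Hx | apply Hf, Hx | rewrite Hxy; apply Hf, Hy]. }
  assert (Hincl : incl (map f l) (seq 0 m)).
  { intros i Hi. apply in_map_iff in Hi. destruct Hi as [x [<- Hx]].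
    apply in_seq. specialize (Hf x Hx). lia. }
  apply NoDup_incl_length in Hincl; [|exact Hmap].
  rewrite length_map, length_seq in Hincl. exact Hincl.
Qed.

Definition inter_shift (D : list nat) (a : Z) : list nat :=
  filter (fun d => existsb (fun d' => Z.eqb (Z.of_nat d) (Z.of_nat d' + a)) D) D.

Lemma length_inter_shift D a : length (inter_shift D a) = card_inter_shift D a.
Proof. reflexivity. Qed.

Lemma In_inter_shift D a x :
  In x (inter_shift D a) <-> In x D /\ exists d', In d' D /\ Z.of_nat x = (Z.of_nat d' + a)%Z.
Proof.
  unfold inter_shift. rewrite filter_In, existsb_exists. split.
  - intros [H1 [d' [H2 H3]]]. apply Z.eqb_eq in H3. eauto.
  - intros [H1 [d' [H2 H3]]]. split; auto. exists d'. split; auto. apply Z.eqb_eq; auto.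
Qed.

Lemma length_inter_shift_le D a : (length (inter_shift D a) <= length D)%nat.
Proof. apply filter_length_le. Qed.

Lemma inter_shift_nonempty D a : in_diffset D a -> (0 < length (inter_shift D a))%nat.
Proof.
  intros [p [q [Hp [Hq Hpq]]]].
  assert (Hin : In p (inter_shift D a))
    by (apply In_inter_shift; split; auto; exists q; split; auto; lia).
  destruct (inter_shift D a); [contradiction | simpl; lia].
Qed.

Fixpoint words (D : list nat) (alpha : nat -> Z) (k : nat) : list (list nat) :=
  match k with
  | O => nil :: nil
  | S k' => flat_map (fun w => map (fun x => w ++ x :: nil) (inter_shift D (alpha k)))
                     (words D alpha k')
  end.

Lemma length_words D alpha k : length (words D alpha k) = Mk D alpha k.
Proof.
  induction k as [|k IH]; simpl; [reflexivity|].
  rewrite (flat_map_constant_length (c := length (inter_shift D (alpha (S k))))).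
  - rewrite IH. reflexivity.
  - intros x _. apply length_map.
Qed.

Lemma map_seq_In_words D alpha (d : nat -> nat) k :
  (forall j, (1 <= j <= k)%nat -> In (d j) (inter_shift D (alpha j))) ->
  In (map d (seq 1 k)) (words D alpha k).
Proof.
  induction k as [|k IH]; intro H; [simpl; auto|].
  rewrite seq_S, map_app. cbn [words].
  apply in_flat_map. exists (map d (seq 1 k)). split.
  - apply IH. intros j Hj. apply H. lia.
  - apply (in_map (fun x => map d (seq 1 k) ++ x :: nil)). apply H. lia.
Qed.

Lemma In_words D alpha k w : In w (words D alpha k) ->
  length w = k /\ forall j, (j < k)%nat -> In (nth j w 0%nat) (inter_shift D (alpha (S j))).
Proof.
  revert w. induction k as [|k IH]; intros w Hw; simpl in Hw.
  - destruct Hw as [<-|[]]. split; [reflexivity | intros; lia].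
  - apply in_flat_map in Hw. destruct Hw as [v [Hv Hw]]. apply in_map_iff in Hw.
    destruct Hw as [x [<- Hx]]. destruct (IH v Hv) as [Hlen Hnth]. split.
    + rewrite length_app. simpl. lia.
    + intros j Hj. destruct (Nat.eq_dec j k) as [->|Hjk].
      * rewrite app_nth2, Hlen, Nat.sub_diag by lia. exact Hx.
      * rewrite app_nth1 by lia. apply Hnth. lia.
Qed.

Lemma NoDup_words D alpha k : NoDup D -> NoDup (words D alpha k).
Proof.
  intro HD. induction k as [|k IH]; simpl.
  - constructor; [simpl; auto | constructor].
  - apply NoDup_flat_map; auto.
    + intro w. apply NoDup_map_NoDup_ForallPairs.
      * intros x y _ _ Hxy. apply app_inj_tail in Hxy. tauto.
      * apply NoDup_filter, HD.
    + intros x y b _ _ Hx Hy. apply in_map_iff in Hx, Hy.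
      destruct Hx as [u [<- _]]. destruct Hy as [v [Hv _]].
      apply app_inj_tail in Hv. destruct Hv; auto.
Qed.

(** * The set [C_{n,D} ∩ (C_{n,D} + alpha)] *)

Definition expansion_term (n : nat) (d : nat -> nat) (k : nat) : C :=
  Cmult (RtoC (INR (d (S k)))) (binvpow n (S k)).

Lemma is_series_zexpansion_sub n e e' z z' :
  is_series (zexpansion_term n e) z -> is_series (zexpansion_term n e') z' ->
  is_series (zexpansion_term n (fun j => (e j - e' j)%Z)) (Cminus z z').
Proof.
  intros Hs Hs'. assert (H := is_series_minus _ _ _ _ Hs Hs').
  revert H. apply is_series_ext. intro k. unfold zexpansion_term. rewrite minus_IZR.
  destruct (binvpow n (S k)). apply injective_projections; simpl; ring.
Qed.

Lemma is_series_expansion_Z n d z : is_series (expansion_term n d) z ->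
  is_series (zexpansion_term n (fun j => Z.of_nat (d j))) z.
Proof.
  apply is_series_ext. intro k. unfold expansion_term, zexpansion_term.
  rewrite INR_IZR_INZ. reflexivity.
Qed.

Lemma ex_series_expansion n d B : (2 <= n)%nat -> (forall j, INR (d (S j)) <= B) ->
  ex_series (expansion_term n d).
Proof.
  intros Hn HB. assert (Hr := rho_gt1 n Hn).
  assert (HB0 : 0 <= B) by (specialize (HB 0%nat); assert (H := pos_INR (d 1%nat)); lra).
  apply (@ex_series_le C_AbsRing C_CompleteNormedModule _ (fun j => B * (/ rho n) ^ j)).
  - intro j. change (norm (expansion_term n d j)) with (Cmod (expansion_term n d j)).
    unfold expansion_term.
    rewrite Cmod_mult, Cmod_R, Cmod_binvpow, Rabs_right by (apply Rle_ge, pos_INR).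
    rewrite pow_inv. simpl pow.
    assert (Hp : 0 < rho n ^ j) by (apply pow_lt; lra).
    assert (H := HB j). assert (H2 := pos_INR (d (S j))).
    apply Rle_div_l; [apply Rmult_lt_0_compat; lra|].
    replace (B * / rho n ^ j * (rho n * rho n ^ j)) with (B * rho n) by (field; lra). nra.
  - exists (B * / (1 - / rho n)).
    apply (@is_series_scal R_AbsRing R_NormedModule B (fun j => (/ rho n) ^ j)).
    apply is_series_geom. rewrite Rabs_right.
    + rewrite <- Rinv_1. apply Rinv_lt_contravar; lra.
    + apply Rle_ge, Rlt_le, Rinv_0_lt_compat; lra.
Qed.

Section Intersection.

Variables (n : nat) (D : list nat) (alpha : nat -> Z) (a : C).
Hypothesis n_ge2 : (2 <= n)%nat.
Hypothesis D_NoDup : NoDup D.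
Hypothesis D_le : forall d, In d D -> (d <= Nat.div (n * n) 2)%nat.
Hypothesis diffset_gap : forall x y, in_diffset D x -> in_diffset D y -> Z.abs (x - y) <> 1%Z.
Hypothesis alpha_in_diffset : forall j, (1 <= j)%nat -> in_diffset D (alpha j).
Hypothesis a_expansion : is_series (zexpansion_term n alpha) a.

Local Notation F := (fun z => attractor n D z /\ attractor n D (Cminus z a)).

Definition admissible (d : nat -> nat) : Prop :=
  forall j, (1 <= j)%nat -> In (d j) (inter_shift D (alpha j)).

Lemma diffset_abs_le x : in_diffset D x -> (2 * Z.abs x <= Z.of_nat (n * n))%Z.
Proof.
  intros [p [q [Hp [Hq ->]]]]. assert (Hpn := D_le p Hp). assert (Hqn := D_le q Hq).
  assert (Hh := Nat.Div0.mul_div_le (n * n) 2). lia.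
Qed.

Lemma admissible_digit_le d j : admissible d -> (1 <= j)%nat -> (d j <= n * n)%nat.
Proof.
  intros Hd Hj. destruct (proj1 (In_inter_shift D (alpha j) (d j)) (Hd j Hj)) as [H _].
  assert (H1 := D_le _ H). assert (Hh := Nat.Div0.mul_div_le (n * n) 2). lia.
Qed.

Lemma INR_admissible_digit_le d j : admissible d -> (1 <= j)%nat -> INR (d j) <= INR n ^ 2.
Proof.
  intros Hd Hj. assert (H := le_INR _ _ (admissible_digit_le d j Hd Hj)).
  rewrite mult_INR in H. simpl. lra.
Qed.

(* Uniqueness of expansions forces the digits of [z] and [z - a] to differ by exactly
   [alpha_j]: the digits of the difference lie in [Delta - Delta], hence are bounded by [n^2]
   and never equal to [+-1]. *)
Lemma attractor_inter_admissible z : F z ->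
  exists d, admissible d /\ is_series (expansion_term n d) z.
Proof.
  intros [[d [Hd Hsd]] [d' [Hd' Hsd']]].
  set (e := fun j => (Z.of_nat (d j) - Z.of_nat (d' j) - alpha j)%Z).
  assert (Hs : is_series (zexpansion_term n e) (RtoC 0)).
  { assert (H := is_series_zexpansion_sub n _ _ _ _
                   (is_series_zexpansion_sub n _ _ _ _ (is_series_expansion_Z n d z Hsd)
                                                   (is_series_expansion_Z n d' _ Hsd'))
                   a_expansion).
    match type of H with is_series _ ?l => replace l with (RtoC 0) in H end; [exact H|].
    apply injective_projections; simpl; ring. }
  assert (Hdd' : forall j, (1 <= j)%nat -> in_diffset D (Z.of_nat (d j) - Z.of_nat (d' j))).
  { intros j Hj. exists (d j), (d' j). auto. }
  assert (He0 := zexpansion_zero_digits n e n_ge2).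
  exists d. split; [|exact Hsd]. intros j Hj.
  apply In_inter_shift. split; [apply Hd, Hj|]. exists (d' j). split; [apply Hd', Hj|].
  enough (e j = 0%Z) by (unfold e in *; lia).
  apply He0; [| | exact Hs | exact Hj].
  - intros i Hi. assert (H1 := diffset_abs_le _ (Hdd' i Hi)).
    assert (H2 := diffset_abs_le _ (alpha_in_diffset i Hi)). unfold e. lia.
  - intros i Hi. apply diffset_gap; [apply Hdd', Hi | apply alpha_in_diffset, Hi].
Qed.

Lemma admissible_attractor_inter d z : admissible d -> is_series (expansion_term n d) z -> F z.
Proof.
  intros Hd Hs. split.
  - exists d. split; auto. intros j Hj. apply (In_inter_shift D (alpha j)), Hd, Hj.
  - exists (fun j => Z.to_nat (Z.of_nat (d j) - alpha j)).
    assert (Hshift : forall j, (1 <= j)%nat ->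
                       exists d', In d' D /\ Z.of_nat (d j) = (Z.of_nat d' + alpha j)%Z)
      by (intros j Hj; apply (In_inter_shift D (alpha j)), Hd, Hj).
    split.
    + intros j Hj. destruct (Hshift j Hj) as [d' [Hd' Heq]].
      replace (Z.to_nat (Z.of_nat (d j) - alpha j)) with d' by lia. exact Hd'.
    + assert (H := is_series_minus _ _ _ _ Hs a_expansion).
      revert H. apply is_series_ext. intro k.
      destruct (Hshift (S k) ltac:(lia)) as [d' [_ Heq]].
      unfold expansion_term, zexpansion_term.
      rewrite (INR_IZR_INZ (Z.to_nat _)), Z2Nat.id by lia.
      rewrite minus_IZR, <- INR_IZR_INZ.
      destruct (binvpow n (S k)). apply injective_projections; simpl; ring.
Qed.

Lemma Cmod_sub_le_same_prefix d d' z z' k : admissible d -> admissible d' ->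
  is_series (expansion_term n d) z -> is_series (expansion_term n d') z' ->
  (forall j, (1 <= j <= k)%nat -> d j = d' j) ->
  Cmod (Cminus z z') <= INR n ^ 2 / (rho n - 1) / rho n ^ k.
Proof.
  intros Hd Hd' Hs Hs' Hsame.
  assert (H := is_series_zexpansion_sub n _ _ _ _ (is_series_expansion_Z n d z Hs)
                                              (is_series_expansion_Z n d' z' Hs')).
  apply (Cmod_series_tail_le _ _ (rho n) (INR n ^ 2) k (rho_gt1 n n_ge2)
           (pow_le _ 2 (pos_INR n)) H).
  - intros j Hj. unfold zexpansion_term. rewrite Hsame by lia. rewrite Z.sub_diag.
    apply injective_projections; simpl; ring.
  - intro j. unfold zexpansion_term.
    rewrite Cmod_mult, Cmod_R, Cmod_binvpow, minus_IZR, <- !INR_IZR_INZ.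
    assert (B1 := INR_admissible_digit_le d (S j) Hd ltac:(lia)).
    assert (B2 := INR_admissible_digit_le d' (S j) Hd' ltac:(lia)).
    assert (P1 := pos_INR (d (S j))). assert (P2 := pos_INR (d' (S j))).
    assert (Hr := rho_gt1 n n_ge2).
    assert (Hp : 0 < / rho n ^ S j) by (apply Rinv_0_lt_compat, pow_lt; lra).
    unfold Rdiv. apply Rmult_le_compat_r; [lra|].
    unfold Rabs. destruct Rcase_abs; lra.
Qed.

(* [b ^ k] times the difference is a nonzero Gaussian integer. *)
Lemma Cmod_sub_ge_diff_prefix d d' z z' k : admissible d -> admissible d' ->
  is_series (expansion_term n d) z -> is_series (expansion_term n d') z' ->
  (forall j, (k < j)%nat -> d j = d' j) ->
  (exists j, (1 <= j <= k)%nat /\ d j <> d' j) ->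
  / rho n ^ k <= Cmod (Cminus z z').
Proof.
  intros Hd Hd' Hs Hs' Hsame [j [Hj Hdiff]].
  assert (H := is_series_zexpansion_sub n _ _ _ _ (is_series_expansion_Z n d z Hs)
                                              (is_series_expansion_Z n d' z' Hs')).
  rewrite (is_series_finite _ _ k H).
  - apply Cmod_csum_zexpansion_ge; [exact n_ge2 | |].
    + intros i Hi. assert (B1 := admissible_digit_le d i Hd ltac:(lia)).
      assert (B2 := admissible_digit_le d' i Hd' ltac:(lia)). lia.
    + exists j. split; [exact Hj | lia].
  - intros i Hi. unfold zexpansion_term. rewrite Hsame by lia. rewrite Z.sub_diag.
    apply injective_projections; simpl; ring.
Qed.

Lemma attractor_inter_covered k :
  covered_by F (Mk D alpha k) (INR n ^ 2 / (rho n - 1) / rho n ^ k).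
Proof.
  exists (fun i z => exists d, admissible d /\ is_series (expansion_term n d) z /\
                        map d (seq 1 k) = nth i (words D alpha k) nil).
  split.
  - intros i _ x y [d [Hd [Hs Hw]]] [d' [Hd' [Hs' Hw']]].
    apply (Cmod_sub_le_same_prefix d d'); auto.
    intros j Hj. rewrite <- Hw' in Hw. apply (map_seq_ext_inv d d' 1 k Hw). lia.
  - intros z Hz. destruct (attractor_inter_admissible z Hz) as [d [Hd Hs]].
    destruct (In_nth _ _ nil (map_seq_In_words D alpha d k (fun j Hj => Hd j (proj1 Hj))))
      as [i [Hi Hni]].
    exists i. split; [rewrite <- length_words; exact Hi|]. exists d. auto.
Qed.

Definition word_digits (k : nat) (w : list nat) (j : nat) : nat :=
  if (j <=? k)%nat then nth (j - 1) w 0%nat else hd 0%nat (inter_shift D (alpha j)).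

Lemma word_digits_admissible k w : In w (words D alpha k) -> admissible (word_digits k w).
Proof.
  intros Hw j Hj. unfold word_digits. destruct (Nat.leb_spec j k) as [Hjk|Hjk].
  - replace j with (S (j - 1)) at 2 by lia. apply (In_words D alpha k w Hw). lia.
  - assert (Hne := inter_shift_nonempty D (alpha j) (alpha_in_diffset j Hj)).
    destruct (inter_shift D (alpha j)); [simpl in Hne; lia | left; reflexivity].
Qed.

Lemma word_digits_neq k w w' : In w (words D alpha k) -> In w' (words D alpha k) -> w <> w' ->
  exists j, (1 <= j <= k)%nat /\ word_digits k w j <> word_digits k w' j.
Proof.
  intros Hw Hw' Hne. apply NNPP. intro Hall. apply Hne.
  destruct (In_words D alpha k w Hw) as [Hl _]. destruct (In_words D alpha k w' Hw') as [Hl' _].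
  apply (nth_ext _ _ 0%nat 0%nat); [congruence|]. intros i Hi.
  apply NNPP. intro Hi'. apply Hall. exists (S i). split; [lia|].
  unfold word_digits. destruct (Nat.leb_spec (S i) k); [|lia].
  replace (S i - 1)%nat with i by lia. exact Hi'.
Qed.

Lemma ex_series_word k w : In w (words D alpha k) -> ex_series (expansion_term n (word_digits k w)).
Proof.
  intro Hw. apply (ex_series_expansion n _ (INR n ^ 2) n_ge2).
  intro j. apply INR_admissible_digit_le; [apply word_digits_admissible, Hw | lia].
Qed.

(* The points with digit words in [words D alpha k] are [rho ^ -k]-separated, so a set of
   smaller diameter contains at most one of them. *)
Lemma attractor_inter_cover_ge k m delta : delta < / rho n ^ k -> covered_by F m delta ->
  (Mk D alpha k <= m)%nat.
Proof.
  intros Hdelta [U [Hdiam Hcov]]. rewrite <- length_words.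
  apply (NoDup_length_le_indices _ m
           (fun w i => exists z, is_series (expansion_term n (word_digits k w)) z /\ U i z)).
  - apply NoDup_words, D_NoDup.
  - intros w Hw. destruct (ex_series_word k w Hw) as [z Hz].
    destruct (Hcov z) as [i [Hi HUi]].
    { apply (admissible_attractor_inter (word_digits k w));
        [apply word_digits_admissible, Hw | exact Hz]. }
    exists i. split; [exact Hi|]. exists z. auto.
  - intros w w' i Hw Hw' Hi [z [Hz HUz]] [z' [Hz' HUz']]. apply NNPP. intro Hne.
    assert (Hsame : forall j, (k < j)%nat -> word_digits k w j = word_digits k w' j).
    { intros j Hj. unfold word_digits. destruct (Nat.leb_spec j k); [lia | reflexivity]. }
    assert (Hsep := Cmod_sub_ge_diff_prefix _ _ _ _ k
                      (word_digits_admissible k w Hw) (word_digits_admissible k w' Hw')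
                      Hz Hz' Hsame (word_digits_neq k w w' Hw Hw' Hne)).
    specialize (Hdiam i Hi _ _ HUz HUz'). lra.
Qed.

End Intersection.

Lemma Mk_ge1 D alpha k : (forall j, (1 <= j)%nat -> in_diffset D (alpha j)) ->
  (1 <= Mk D alpha k)%nat.
Proof.
  intro Halpha. induction k as [|k IH]; simpl; [lia|].
  assert (H := inter_shift_nonempty D (alpha (S k)) (Halpha (S k) ltac:(lia))).
  rewrite length_inter_shift in H. nia.
Qed.

Lemma Mk_le_pow D alpha k : INR (Mk D alpha k) <= INR (length D) ^ k.
Proof.
  induction k as [|k IH]; simpl; [lra|].
  rewrite mult_INR, Rmult_comm. apply Rmult_le_compat; try apply pos_INR; [|exact IH].
  apply le_INR, length_inter_shift_le.
Qed.

Theorem theorem4p5 (n : nat) (D : list nat) (alpha : nat -> Z) (a : Complex.C) :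
  (2 <= n)%nat ->
  NoDup D ->
  (forall d, In d D -> (d <= Nat.div (n * n) 2)%nat) ->
  (forall x y, in_diffset D x -> in_diffset D y -> Z.abs (x - y) <> 1%Z) ->
  (forall j, (1 <= j)%nat -> in_diffset D (alpha j)) ->
  is_series (fun k => Cmult (RtoC (IZR (alpha (S k)))) (binvpow n (S k))) a ->
  lower_box_dim (fun z => attractor n D z /\ attractor n D (Cminus z a)) =
  LimInf_seq (fun k => ln (INR (Mk D alpha k)) / (INR k * ln (Cmod (base n)))).
Proof.
  intros Hn HD Hbd Hdiff Halpha Ha.
  apply (lower_box_dim_growth_rate _ (Mk D alpha) (rho n) (INR n ^ 2 / (rho n - 1))
           (INR (length D))).
  - exact (rho_gt1 n Hn).
  - assert (Hr := rho_gt1 n Hn). apply Rdiv_lt_0_compat; [apply pow_lt, (lt_INR 0); lia | lra].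
  - apply (le_INR 1). eapply Nat.le_trans; [|apply (length_inter_shift_le D (alpha 1%nat))].
    apply inter_shift_nonempty, Halpha, le_n.
  - intro k. apply Mk_ge1, Halpha.
  - intro k. apply Mk_le_pow.
  - intro k. eapply attractor_inter_covered; eauto.
  - intros k m delta. eapply attractor_inter_cover_ge; eauto.
Qed.
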